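(* Let $n\ge2$ be a power of 2 and $f = \mathsf{ADDR}_n$. Then $\mathsf{D}_{\mathrm{cc}}^\rightarrow(f \circ \mathsf{AND}) \geq \mathrm{rank}(M_{f \circ \mathsf{AND}})^{\log_3 2}$.
   Context: $\mathsf{ADDR}_n:\{0,1\}^{\log n+n}\to\{0,1\}$ is $\mathsf{ADDR}_n(x,y)=y_{\mathsf{bin}(x)}$ for $x\in\{0,1\}^{\log n}$, $y\in\{0,1\}^n$, where $\mathsf{bin}(x)\in[n]$ is the integer whose binary representation is $x$. For $f:\{0,1\}^m\to\{0,1\}$, $f\circ\mathsf{AND}$ is the two-party function $(u,v)\mapsto f(u_1\wedge v_1,\dots,u_m\wedge v_m)$ with Alice holding $u\in\{0,1\}^m$, Bob $v\in\{0,1\}^m$; $M_{f\circ\mathsf{AND}}$ is its communication matrix (entry $(u,v)$ equals $(f\circ\mathsf{AND})(u,v)$), $\mathrm{rank}$ is real rank, and $\mathsf{D}_{\mathrm{cc}}^\rightarrow$ is deterministic one-way communication complexity. *)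

From Stdlib Require Import Reals.
From HB Require Import structures.
From mathcomp Require Import all_boot all_order all_algebra.
From mathcomp Require Import Rstruct.
Set Implicit Arguments. Unset Strict Implicit. Unset Printing Implicit Defensive.
Import GRing.Theory.

(* bin x : the integer whose binary representation is x (most significant bit first). *)
Definition bin (x : seq bool) : nat := foldl (fun acc (b : bool) => acc.*2 + b) 0 x.

(* ADDR_n with n = 2^k: input w in {0,1}^(k + 2^k), w = (x, y), x of length k,
   y of length 2^k indexed from 0; output y_{bin(x)}. *)
Definition ADDR (k : nat) (w : (k + 2 ^ k).-tuple bool) : bool :=
  nth false (drop k w) (bin (take k w)).

Definition compAND (m : nat) (f : m.-tuple bool -> bool)
  (u v : m.-tuple bool) : bool :=
  f [tuple tnth u i && tnth v i | i < m].

Definition commMx (U V : finType) (F : U -> V -> bool) : 'M[R]_(#|U|, #|V|) :=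
  \matrix_(i, j) ((F (enum_val i) (enum_val j))%:R)%R.

Definition oneway_protocol (U V : finType) (F : U -> V -> bool) (c : nat) : bool :=
  [exists A : {ffun U -> c.-tuple bool},
     exists B : {ffun (c.-tuple bool * V) -> bool},
       [forall u, forall v, B (A u, v) == F u v]].

Lemma oneway_protocol_exists (U V : finType) (F : U -> V -> bool) :
  exists c, oneway_protocol F c.
Proof.
set c := #|U|.
pose A : {ffun U -> c.-tuple bool} := [ffun u : U => [tuple (enum_rank u == i) | i < c]].
pose B : {ffun (c.-tuple bool * V) -> bool} := [ffun p : c.-tuple bool * V =>
   if [pick u : U | A u == p.1] is Some u then F u p.2 else false].
exists c; apply/existsP; exists A; apply/existsP; exists B.
apply/forallP => u; apply/forallP => v; rewrite ffunE /=.
case: pickP => [u' /eqP Hu|/(_ u)]; last by rewrite eqxx.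
have -> : u' = u; last by [].
apply: enum_rank_inj; move/(congr1 (fun t : c.-tuple bool => tnth t (enum_rank u))): Hu.
by rewrite !ffunE !tnth_mktuple eqxx => /eqP.
Qed.

Definition Dcc_oneway (U V : finType) (F : U -> V -> bool) : nat :=
  ex_minn (oneway_protocol_exists F).

(* Write the input of ADDR_k o AND as (u, v), and x for the first k bits of
   u /\ v.  The output is cell_u(x) * cell_v(x), and the indicator of x = a is
   the product over the k address bits of [u_i /\ v_i = a_i], each a sum of
   rank-one terms drawn from three fixed ones.  Expanding the product writes the
   communication matrix as a sum of 3^k rank-one matrices, so its rank is at
   most 3^k.  Conversely, if Alice's address bits and Bob's memory bits are all
   ones, Bob can read any of Alice's 2^k memory bits, so Alice's message must
   determine her memory and has at least 2^k bits.  Finally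
   rank^(log_3 2) <= (3^k)^(log_3 2) = 2^k <= D. *)

From Stdlib Require Import Reals Lra.
From mathcomp Require Import all_boot all_order all_algebra.
From mathcomp Require Import Rstruct.
Set Implicit Arguments. Unset Strict Implicit. Unset Printing Implicit Defensive.
Import GRing.Theory.

Local Open Scope ring_scope.

Lemma mxrank_commMx_factor (U V T : finType) (F : U -> V -> bool)
    (a : U -> T -> R) (b : T -> V -> R) :
    (forall u v, (F u v)%:R = \sum_t a u t * b t v) ->
  (\rank (commMx F) <= #|T|)%N.
Proof.
move=> Fab.
pose A : 'M_(#|U|, #|T|) := \matrix_(i, t) a (enum_val i) (enum_val t).
pose B : 'M_(#|T|, #|V|) := \matrix_(t, j) b (enum_val t) (enum_val j).
have -> : commMx F = A *m B.
  apply/matrixP => i j; rewrite !mxE Fab (big_enum_val (A := T)) /=.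
  by apply: eq_bigr => t _; rewrite !mxE.
exact: leq_trans (mxrankM_maxl _ _) (rank_leq_col _).
Qed.

Lemma prod_eq_indicator (I : finType) (T : eqType) (a b : {ffun I -> T}) :
  \prod_i ((a i == b i)%:R : R) = (a == b)%:R.
Proof.
have [-> | /eqP neq_ab] := eqVneq a b; first by rewrite big1 // => i _; rewrite eqxx.
have [i /negbTE neq_i] : exists i, a i != b i.
  apply/existsP; apply: contra_notT neq_ab => /existsPn eq_ab.
  by apply/ffunP => i; apply/eqP/negPn.
by rewrite (bigD1 i) //= neq_i mul0r.
Qed.

Definition and_index (j : 'I_3) : bool := val j == 2%N.
Definition alice_term (j : 'I_3) (p : bool) : R := [:: 1; - p%:R; p%:R]`_j.
Definition bob_term (j : 'I_3) (q : bool) : R := [:: 1; q%:R; q%:R]`_j.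

(* [p && q = 0] = 1 * 1 + (- p) * q and [p && q = 1] = p * q: three rank-one
   terms in (p, q), selected by [and_index]. *)
Lemma and_eq_indicator (b p q : bool) :
  ((p && q) == b)%:R =
  \sum_(j < 3) (b == and_index j)%:R * (alice_term j p * bob_term j q).
Proof.
rewrite !big_ord_recr big_ord0 /alice_term /bob_term /=.
by case: b; case: p; case: q;
  rewrite /= ?(mul0r, mulr0, mul1r, mulr1, add0r, addr0, oppr0, subr0, subrr).
Qed.

Definition and_pattern (I : finType) (t : {ffun I -> 'I_3}) : {ffun I -> bool} :=
  [ffun i => and_index (t i)].

Lemma and_expansion (I : finType) (G : {ffun I -> bool} -> R) (p q : I -> bool) :
  G [ffun i => p i && q i] =
  \sum_(t : {ffun I -> 'I_3})
     G (and_pattern t) * \prod_i (alice_term (t i) (p i) * bob_term (t i) (q i)).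
Proof.
set x := [ffun i => p i && q i].
have indicator_expansion a : (x == a)%:R = \sum_(t : {ffun I -> 'I_3})
    (a == and_pattern t)%:R * \prod_i (alice_term (t i) (p i) * bob_term (t i) (q i)).
  rewrite -prod_eq_indicator.
  under eq_bigr => i _ do rewrite ffunE and_eq_indicator.
  rewrite bigA_distr_bigA; apply: eq_bigr => t _.
  rewrite big_split /= -prod_eq_indicator; congr (_ * _).
  by apply: eq_bigr => i _; rewrite ffunE.
transitivity (\sum_a G a * (x == a)%:R).
  rewrite (bigD1 x) //= eqxx mulr1 big1 ?addr0 // => a.
  by rewrite eq_sym => /negbTE ->; rewrite mulr0.
under eq_bigr => a _ do rewrite indicator_expansion mulr_sumr.
rewrite exchange_big; apply: eq_bigr => t _.
rewrite (bigD1 (and_pattern t)) //= eqxx mul1r [X in _ + X]big1 ?addr0 // => a.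
by move=> /negbTE ->; rewrite mul0r mulr0.
Qed.

Lemma oneway_protocol_rows (W U V : finType) (F : U -> V -> bool) (e : W -> U) (c : nat) :
    (forall w w', F (e w) =1 F (e w') -> w = w') ->
  oneway_protocol F c -> (#|W| <= 2 ^ c)%N.
Proof.
move=> rows_inj /existsP[A /existsP[B /forallP correct]].
have msg_inj : injective (A \o e).
  move=> w w' /= eq_msg; apply: rows_inj => v.
  by rewrite -(eqP (forallP (correct (e w)) v)) eq_msg (eqP (forallP (correct (e w')) v)).
by have := leq_card _ msg_inj; rewrite card_tuple card_bool.
Qed.

Lemma bin_rcons (s : seq bool) (b : bool) : bin (rcons s b) = ((bin s).*2 + b)%N.
Proof. by rewrite /bin foldl_rcons. Qed.

Lemma bin_onto (k j : nat) : (j < 2 ^ k)%N -> exists s : k.-tuple bool, bin s = j.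
Proof.
elim: k j => [|k IHk] j lt_j.
  by exists [tuple]; move: lt_j; rewrite expn0 ltnS leqn0 => /eqP ->.
have [s bin_s] : exists s : k.-tuple bool, bin s = j./2.
  apply: IHk; rewrite -ltn_double -[X in (_ < X)%N]mul2n -expnS.
  by rewrite (leq_ltn_trans _ lt_j) // -[j in (_ <= j)%N]odd_double_half leq_addl.
by exists [tuple of rcons s (odd j)]; rewrite bin_rcons bin_s addnC odd_double_half.
Qed.

Definition andw (n : nat) (u v : n.-tuple bool) : n.-tuple bool :=
  [tuple tnth u i && tnth v i | i < n].

Lemma nth_andw (n : nat) (u v : n.-tuple bool) (i : nat) :
  nth false (andw u v) i = nth false u i && nth false v i.
Proof.
have [lt_in | le_ni] := ltnP i n; last by rewrite !nth_default ?size_tuple.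
by rewrite -(tnth_nth _ _ (Ordinal lt_in)) tnth_mktuple !(tnth_nth false).
Qed.

Section AddressFunction.
Variable k : nat.
Local Notation m := (k + 2 ^ k)%N.

Lemma compAND_ADDRE (u v : m.-tuple bool) :
  compAND (@ADDR k) u v =
  let i := (k + bin (take k (andw u v)))%N in nth false u i && nth false v i.
Proof. by rewrite /compAND /ADDR nth_drop -nth_andw. Qed.

Definition cell (w : m.-tuple bool) (a : {ffun 'I_k -> bool}) : bool :=
  nth false w (k + bin (codom a)).

Lemma take_andw (u v : m.-tuple bool) :
  take k (andw u v) = codom [ffun i : 'I_k => nth false u i && nth false v i].
Proof.
rewrite -(map_nth_iota0 false) ?size_tuple ?leq_addr // codomE -val_enum_ord -map_comp.
by apply: eq_map => i /=; rewrite ffunE nth_andw.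
Qed.

Definition alice_factor (u : m.-tuple bool) (t : {ffun 'I_k -> 'I_3}) : R :=
  (cell u (and_pattern t))%:R * \prod_i alice_term (t i) (nth false u i).

Definition bob_factor (t : {ffun 'I_k -> 'I_3}) (v : m.-tuple bool) : R :=
  (cell v (and_pattern t))%:R * \prod_i bob_term (t i) (nth false v i).

Lemma compAND_ADDR_factor (u v : m.-tuple bool) :
  (compAND (@ADDR k) u v)%:R = \sum_t alice_factor u t * bob_factor t v.
Proof.
rewrite compAND_ADDRE /= take_andw -mulnb natrM.
rewrite (and_expansion (fun a => (cell u a)%:R * (cell v a)%:R)).
by apply: eq_bigr => t _; rewrite big_split /= mulrACA.
Qed.

Lemma rank_commMx_compAND_ADDR : (\rank (commMx (compAND (@ADDR k))) <= 3 ^ k)%N.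
Proof.
have := mxrank_commMx_factor compAND_ADDR_factor.
by rewrite card_ffun !card_ord.
Qed.

Lemma compAND_ADDR_select (y : (2 ^ k).-tuple bool) (s : k.-tuple bool) :
  compAND (@ADDR k) [tuple of nseq k true ++ y] [tuple of s ++ nseq (2 ^ k) true]
  = nth false y (bin s).
Proof.
set u := [tuple of nseq k true ++ y]; set v := [tuple of s ++ nseq (2 ^ k) true].
have take_k : take k (andw u v) = s.
  apply: (@eq_from_nth _ false); first by rewrite size_takel ?size_tuple ?leq_addr.
  move=> i; rewrite size_takel ?size_tuple ?leq_addr // => lt_ik.
  by rewrite nth_take // nth_andw !nth_cat size_nseq size_tuple lt_ik nth_nseq lt_ik.
rewrite compAND_ADDRE /= take_k !nth_cat size_nseq size_tuple !ltnNge leq_addr /= addKn.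
have [lt_j | le_j] := ltnP (bin s) (2 ^ k); first by rewrite nth_nseq lt_j andbT.
by rewrite !nth_default ?size_tuple.
Qed.

Lemma Dcc_oneway_compAND_ADDR : (2 ^ k <= Dcc_oneway (compAND (@ADDR k)))%N.
Proof.
rewrite /Dcc_oneway; case: ex_minnP => c protocol_c _.
rewrite -(@leq_exp2l 2) //.
pose alice_row (y : (2 ^ k).-tuple bool) := [tuple of nseq k true ++ y].
have := oneway_protocol_rows (e := alice_row) _ protocol_c.
rewrite card_tuple card_bool; apply=> y y' same_rows.
apply: eq_from_tnth => j; have [s bin_s] := bin_onto (ltn_ord j).
by rewrite !(tnth_nth false) -bin_s -!compAND_ADDR_select same_rows.
Qed.
End AddressFunction.

Local Open Scope R_scope.

Lemma INR_expn (n k : nat) : INR (n ^ k)%N = INR n ^ k.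
Proof. by rewrite -pow_INR; congr INR; elim: k => //= k <-; rewrite expnS. Qed.

Lemma ln3_gt0 : 0 < ln 3.
Proof. by rewrite -ln_1; apply: ln_increasing; lra. Qed.

Lemma Rpower_pow3_log3_2 (k : nat) : Rpower (3 ^ k) (ln 2 / ln 3) = 2 ^ k.
Proof.
rewrite -!Rpower_pow; try lra.
by rewrite Rpower_mult /Rpower; congr exp; field; apply: Rgt_not_eq; apply: ln3_gt0.
Qed.

Lemma Rpower_log3_2_le (r d k : nat) : (r <= 3 ^ k)%N -> (2 ^ k <= d)%N ->
  Rpower (INR r) (ln 2 / ln 3) <= INR d.
Proof.
move=> /leP/le_INR r_le /leP/le_INR d_ge.
rewrite !INR_expn (INR_IZR_INZ 3) (INR_IZR_INZ 2) /= in r_le d_ge.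
apply: Rle_trans d_ge; have [-> | /ltP/lt_0_INR r_gt0] := posnP r.
  have ln_0 : ln 0 = 0 by rewrite /ln; case: Rlt_dec => // /Rlt_irrefl [].
  rewrite /Rpower /= ln_0 Rmult_0_r exp_0; apply: pow_R1_Rle; lra.
rewrite -Rpower_pow3_log3_2; apply: Rle_Rpower_l => //.
apply: Rlt_le; apply: Rdiv_lt_0_compat; last exact: ln3_gt0.
by have := ln_lt_2; lra.
Qed.

Theorem corollaryA5 (k : nat) (hk : (1 <= k)%N) :
  (Rpower (INR (\rank (commMx (compAND (@ADDR k)))))
          (ln 2 / ln 3)
   <= INR (Dcc_oneway (compAND (@ADDR k))))%R.
Proof.
apply/RleP; apply: Rpower_log3_2_le.
  exact: rank_commMx_compAND_ADDR.
exact: Dcc_oneway_compAND_ADDR.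
Qed.
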